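(* Let $t\ge 2$. Let $G$ be a 2-ichromatic ordered graph with vertices $v_1<\dots<v_{m+n}$ such that $\{v_1,\ldots,v_m\}$ and $\{v_{m+1},\ldots,v_{m+n}\}$ are the parts of an interval 2-coloring of $G$. If $v_1v_{m+1}$, $v_mv_{m+n}$ and $v_mv_{m+1}$ are edges of $G$, then $R_t(G)\ge (2t+1)r+1$, where $r=\min(m,n)-1$.
   Context: An ordered graph is a graph together with a specified linear ordering of its vertex set. An ordered graph $G$ is contained in an ordered graph $H$ if there is an order-preserving injection $V(G)\to V(H)$ mapping edges to edges. An interval coloring of an ordered graph is a partition of its vertex set into independent sets each consisting of consecutive vertices (called parts); an ordered graph is 2-ichromatic if its minimum number of parts in an interval coloring is 2. $R_t(G)$ is the minimum $N$ such that every coloring of the edges of the ordered complete graph on $N$ vertices with $t$ colors contains a monochromatic copy of $G$. *)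

From mathcomp Require Import all_boot.
Set Implicit Arguments. Unset Strict Implicit. Unset Printing Implicit Defensive.

(* An ordered graph on V vertices: vertex set 'I_V ordered by the natural
   order of indices, edge relation e symmetric and irreflexive. *)
Definition ordered_graph (V : nat) (e : rel 'I_V) : Prop :=
  symmetric e /\ irreflexive e.

Definition independent_interval (V : nat) (e : rel 'I_V) (a b : nat) : Prop :=
  forall i j : 'I_V, a <= i < b -> a <= j < b -> ~~ e i j.

(* An interval coloring with k parts, given by cut points
   0 = a 0 < a 1 < ... < a k = V; part p is [a p, a p.+1). *)
Definition interval_coloring (V : nat) (e : rel 'I_V) (k : nat) (a : nat -> nat) : Prop :=
  [/\ a 0 = 0, a k = V,
      (forall p, p < k -> a p < a p.+1) &
      (forall p, p < k -> independent_interval e (a p) (a p.+1))].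

Definition interval_colorable (V : nat) (e : rel 'I_V) (k : nat) : Prop :=
  exists a, interval_coloring e k a.

Definition ichromatic (V : nat) (e : rel 'I_V) (k : nat) : Prop :=
  interval_colorable e k /\ forall j, j < k -> ~ interval_colorable e j.

(* cut points of the 2-part split {v_1..v_m}, {v_{m+1}..v_{m+n}} *)
Definition split2 (m n : nat) (p : nat) : nat :=
  match p with 0 => 0 | 1 => m | _ => m + n end.

(* edge between the vertices with (0-based) indices x and y *)
Definition edge_at (V : nat) (e : rel 'I_V) (x y : nat) : Prop :=
  exists i j : 'I_V, val i = x /\ val j = y /\ e i j.

(* A t-coloring of the edges of the ordered complete graph on 'I_N:
   c i j is the color of edge {i,j}, only consulted for i < j. *)
Definition has_mono_copy (N t : nat) (c : 'I_N -> 'I_N -> 'I_t)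
  (V : nat) (e : rel 'I_V) : Prop :=
  exists (f : 'I_V -> 'I_N) (k : 'I_t),
    (forall i j : 'I_V, i < j -> f i < f j) /\
    (forall i j : 'I_V, i < j -> e i j -> c (f i) (f j) = k).

Definition ramsey_arrow (N t : nat) (V : nat) (e : rel 'I_V) : Prop :=
  forall c : 'I_N -> 'I_N -> 'I_t, has_mono_copy c e.

(** Split [0, N) with N <= (2t+1) r into 2t+1 consecutive blocks of size r and colour
    an edge by the pair of blocks of its endpoints.  A monochromatic copy of G sends
    v_1, v_m, v_{m+1}, v_{m+n} to blocks a < b <= c < d (the parts of G have at least
    r+1 vertices), and its edges v_1v_{m+1}, v_mv_{m+1}, v_mv_{m+n} give a monochromatic
    "zigzag" (a,c), (b,c), (b,d) of block pairs.  Colouring a block pair (p,q) by its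
    depth min(p, 2t - q) avoids such zigzags; depths below t-2 use t-2 colours, and the
    remaining pairs live in the five middle blocks, where two more colours suffice. *)
From mathcomp Require Import all_boot.
From mathcomp Require Import zify.

Set Implicit Arguments.
Unset Strict Implicit.
Unset Printing Implicit Defensive.

Definition zigzag_free (L : nat) (c : nat -> nat -> nat) : Prop :=
  forall a b x d, a < b <= x -> x < d <= L ->
    c a x = c b x -> c b x = c b d -> False.

Definition zigzag_freeb (L : nat) (c : nat -> nat -> nat) : bool :=
  let I := iota 0 L.+1 in
  all (fun a => all (fun b => all (fun x => all (fun d =>
    [&& a < b <= x & x < d] ==> ~~ ((c a x == c b x) && (c b x == c b d))) I) I) I) I.

Lemma zigzag_freeP L c : zigzag_freeb L c -> zigzag_free L c.
Proof.
move=> hc a b x d /andP[ab bx] /andP[xd dL] cax cbx.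
have inI y : y <= L -> y \in iota 0 L.+1 by rewrite mem_iota.
have [aI bI xI] : [/\ a \in iota 0 L.+1, b \in iota 0 L.+1 & x \in iota 0 L.+1].
  by split; apply: inI; lia.
move: hc => /allP/(_ a aI)/allP/(_ b bI)/allP/(_ x xI)/allP/(_ d (inI _ dL)).
by rewrite ab bx xd cax cbx !eqxx.
Qed.

Definition depth_coloring (L p q : nat) : nat := minn p (L - q).

Lemma depth_coloring_zigzag_free L : zigzag_free L (depth_coloring L).
Proof. rewrite /depth_coloring => a b x d /andP[? ?] /andP[? ?] ? ?; lia. Qed.

Definition core_coloring (p q : nat) : nat :=
  if (p, q) \in [:: (1, 1); (1, 3); (1, 4); (2, 2); (2, 4); (3, 4)] then 1 else 0.

Lemma core_coloring_le1 p q : core_coloring p q <= 1.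
Proof. by rewrite /core_coloring; case: ifP. Qed.

Lemma core_coloring_zigzag_free : zigzag_free 4 core_coloring.
Proof. exact: zigzag_freeP. Qed.

(* In the second branch p >= t - 2 and q <= t + 2, so [_ + 2 - t] renumbers the
   middle blocks t-2, ..., t+2 as 0, ..., 4 without truncation. *)
Definition ramsey_coloring (t p q : nat) : nat :=
  let k := depth_coloring (2 * t) p q in
  if k < t - 2 then k else (t - 2) + core_coloring (p + 2 - t) (q + 2 - t).

Lemma ramsey_coloring_lt t p q : 2 <= t -> ramsey_coloring t p q < t.
Proof.
move=> ht; rewrite /ramsey_coloring; case: ifP => hk; first lia.
by have := core_coloring_le1 (p + 2 - t) (q + 2 - t); lia.
Qed.

Lemma ramsey_coloring_zigzag_free t : 2 <= t -> zigzag_free (2 * t) (ramsey_coloring t).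
Proof.
move=> ht a b x d abx xdL; rewrite /ramsey_coloring.
have depth_free := @depth_coloring_zigzag_free _ _ _ _ _ abx xdL.
move: abx xdL => /andP[ab bx] /andP[xd dL].
have := core_coloring_le1 (a + 2 - t) (x + 2 - t).
have := core_coloring_le1 (b + 2 - t) (x + 2 - t).
have := core_coloring_le1 (b + 2 - t) (d + 2 - t).
case: ifP; case: ifP; case: ifP => h1 h2 h3 c1 c2 c3 e1 e2;
  first exact: depth_free e1 e2; try lia.
move: h1 h2 h3; rewrite /depth_coloring => h1 h2 h3.
apply: (@core_coloring_zigzag_free (a + 2 - t) (b + 2 - t) (x + 2 - t) (d + 2 - t)).
- by apply/andP; split; lia.
- by apply/andP; split; lia.
- exact: addnI e1.
- exact: addnI e2.
Qed.

Lemma strict_homo_gap V N (f : 'I_V -> 'I_N) :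
  (forall i j : 'I_V, i < j -> f i < f j) ->
  forall d (i j : 'I_V), val j = val i + d -> f i + d <= f j.
Proof.
move=> f_incr; elim=> [|d IH] i j /= ji.
  by rewrite addn0; have -> : j = i by apply: val_inj; rewrite /= ji addn0.
have id_lt : i + d < V by have := ltn_ord j; lia.
have := IH i (Ordinal id_lt) erefl.
have : Ordinal id_lt < j by rewrite /= ji addnS.
by move/f_incr; lia.
Qed.

Lemma ltn_div_gap r x y : 0 < r -> x + r <= y -> x %/ r < y %/ r.
Proof.
move=> r_gt0 xy; apply: leq_trans (leq_div2r r xy).
by rewrite -{2}[r]mul1n addnC divnMDl // add1n.
Qed.

(* Reducing modulo t only makes the colour land in 'I_t; below, col is already < t. *)
Definition block_coloring (N t r : nat) (t_gt0 : 0 < t) (col : nat -> nat -> nat)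
  (i j : 'I_N) : 'I_t :=
  Ordinal (ltn_pmod (col (i %/ r) (j %/ r)) t_gt0).

Lemma block_coloring_no_zigzag_copy N t r L (t_gt0 : 0 < t) (col : nat -> nat -> nat)
    V (e : rel 'I_V) (u1 u2 u3 u4 : 'I_V) :
  0 < r -> N <= L.+1 * r ->
  (forall p q, col p q < t) -> zigzag_free L col ->
  u1 + r <= u2 -> u2 < u3 -> u3 + r <= u4 ->
  e u1 u3 -> e u2 u3 -> e u2 u4 ->
  ~ has_mono_copy (block_coloring (N := N) r t_gt0 col) e.
Proof.
move=> r_gt0 NL col_lt col_free u12 u23 u34 e13 e23 e24 [f [k [f_incr f_col]]].
have block_col (i j : 'I_V) : i < j -> e i j -> col (f i %/ r) (f j %/ r) = k.
  by move=> ij /(f_col i j ij)/(congr1 val) /=; rewrite modn_small.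
have f12 : f u1 + (u2 - u1) <= f u2 by apply: (strict_homo_gap f_incr) => /=; lia.
have f34 : f u3 + (u4 - u3) <= f u4 by apply: (strict_homo_gap f_incr) => /=; lia.
have f23 := f_incr _ _ u23.
have f4N := ltn_ord (f u4).
apply: (col_free (f u1 %/ r) (f u2 %/ r) (f u3 %/ r) (f u4 %/ r)).
- by apply/andP; split; [apply: ltn_div_gap | apply: leq_div2r]; lia.
- by apply/andP; split; [apply: ltn_div_gap | rewrite -ltnS ltn_divLR]; lia.
- by rewrite (block_col u1 u3) ?(block_col u2 u3) //; lia.
- by rewrite (block_col u2 u3) ?(block_col u2 u4) //; lia.
Qed.

Theorem corollary5p1 (t m n : nat) (e : rel 'I_(m + n)) :
  2 <= t ->
  ordered_graph e ->
  ichromatic e 2 ->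
  interval_coloring e 2 (split2 m n) ->
  edge_at e 0 m ->
  edge_at e (m - 1) (m + n - 1) ->
  edge_at e (m - 1) m ->
  forall N : nat, ramsey_arrow N t e ->
    (2 * t + 1) * (minn m n - 1) + 1 <= N.
Proof.
move=> ht _ _ [_ _ cuts_lt _] [u1 [u3 [v1 [v3 e13]]]] [u2 [u4 [v2 [v4 e24]]]]
  [u2' [u3' [v2' [v3' e23']]]] N arrow.
have m_gt0 : 0 < m := cuts_lt 0 erefl.
have m_lt_mn : m < m + n := cuts_lt 1 erefl.
have t_gt0 : 0 < t by lia.
rewrite leqNgt; apply/negP => N_small; set r := minn m n - 1 in N_small.
have [r0 | r_gt0] := posnP r.
  have [f _] := arrow (fun _ _ => Ordinal t_gt0).
  by case: (f u1) => y; move: N_small; rewrite r0 muln0 ltnS leqn0 => /eqP->.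
have e23 : e u2 u3.
  suff [<- <-] : u2' = u2 /\ u3' = u3 by [].
  by split; apply: val_inj; rewrite /= ?v2' ?v2 ?v3' ?v3.
apply: (@block_coloring_no_zigzag_copy N t r (2 * t) t_gt0
  (ramsey_coloring t) _ e u1 u2 u3 u4) => //.
- by rewrite mulSn; lia.
- by move=> p q; apply: ramsey_coloring_lt.
- exact: ramsey_coloring_zigzag_free.
- by rewrite v1 v2; lia.
- by rewrite v2 v3; lia.
- by rewrite v3 v4; lia.
Qed.
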